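(* Let $X$ be a complete CAT(0)-space. Then every isometry $T$ of $X$ fixes a point of the metric compactification $\overline{X}$, i.e. there is $h\in\overline{X}$ with $Th=h$. If moreover $X$ is proper, every isometry of $X$ fixes a point of the visual compactification of $X$.
   Context: Fix a base point $x_0\in X$. Let $\mathrm{Hom}(X,\mathbb{R})$ be the set of $1$-Lipschitz functions $X\to\mathbb{R}$ with the topology of pointwise convergence, and for $y\in X$ let $h_y(\cdot)=d(\cdot,y)-d(x_0,y)$. The metric compactification $\overline{X}$ is the closure of $\{h_y:y\in X\}$ in $\mathrm{Hom}(X,\mathbb{R})$; its elements are metric functionals. An isometry (surjective distance-preserving map) $T$ acts on $\overline{X}$ by $(Th)(x)=h(T^{-1}x)-h(T^{-1}x_0)$. A metric space is proper if closed bounded sets are compact. The visual compactification of a proper CAT(0)-space is $X\cup\partial X$, where $\partial X$ is the set of equivalence classes of geodesic rays (two rays equivalent if at bounded distance), with the cone topology; isometries act on it naturally. *)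

From Stdlib Require Export Reals List ClassicalEpsilon.
Open Scope R_scope.

Section MetricDefs.
Context {X : Type}.

Record is_metric (d : X -> X -> R) : Prop := {
  d_eq0 : forall x y, d x y = 0 <-> x = y;
  d_sym : forall x y, d x y = d y x;
  d_tri : forall x y z, d x z <= d x y + d y z }.

Definition cauchy_seq (d : X -> X -> R) (u : nat -> X) : Prop :=
  forall eps, 0 < eps -> exists N, forall m n, (N <= m)%nat -> (N <= n)%nat ->
    d (u m) (u n) < eps.

Definition complete (d : X -> X -> R) : Prop :=
  forall u, cauchy_seq d u -> exists l, forall eps, 0 < eps ->
    exists N, forall n, (N <= n)%nat -> d (u n) l < eps.

Definition is_geodesic (d : X -> X -> R) (x y : X) (c : R -> X) : Prop :=
  c 0 = x /\ c (d x y) = y /\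
  forall s t, 0 <= s <= d x y -> 0 <= t <= d x y -> d (c s) (c t) = Rabs (s - t).

Definition geodesic_space (d : X -> X -> R) : Prop :=
  forall x y, exists c, is_geodesic d x y c.

Definition eucl (p q : R * R) : R :=
  sqrt ((fst p - fst q) ^ 2 + (snd p - snd q) ^ 2).
Definition scal (a : R) (p : R * R) : R * R := (a * fst p, a * snd p).

(* CAT(0): geodesic, and for every geodesic triangle with vertices x,y,z
   (sides c1 from x to y, c2 from x to z), every comparison triangle
   (0, ybar, zbar) in R^2 and points p = c1 s, q = c2 t, one has
   d(p,q) <= |pbar - qbar|, pbar, qbar the comparison points. *)
Definition CAT0 (d : X -> X -> R) : Prop :=
  geodesic_space d /\
  forall x y z c1 c2 (ybar zbar : R * R),
    is_geodesic d x y c1 -> is_geodesic d x z c2 ->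
    eucl (0, 0) ybar = d x y -> eucl (0, 0) zbar = d x z -> eucl ybar zbar = d y z ->
    forall s t, 0 <= s <= d x y -> 0 <= t <= d x z ->
      d (c1 s) (c2 t) <= eucl (scal (s / d x y) ybar) (scal (t / d x z) zbar).

Definition is_open (d : X -> X -> R) (U : X -> Prop) : Prop :=
  forall x, U x -> exists r, 0 < r /\ forall y, d x y < r -> U y.
Definition is_closed (d : X -> X -> R) (K : X -> Prop) : Prop :=
  is_open d (fun x => ~ K x).
Definition is_bounded (d : X -> X -> R) (K : X -> Prop) : Prop :=
  exists x r, forall y, K y -> d x y <= r.
Definition is_compact (d : X -> X -> R) (K : X -> Prop) : Prop :=
  forall (I : Type) (U : I -> X -> Prop),
    (forall i, is_open d (U i)) -> (forall x, K x -> exists i, U i x) ->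
    exists l : list I, forall x, K x -> exists i, In i l /\ U i x.
Definition proper (d : X -> X -> R) : Prop :=
  forall K, is_closed d K -> is_bounded d K -> is_compact d K.

Definition lip1 (d : X -> X -> R) (h : X -> R) : Prop :=
  forall x y, Rabs (h x - h y) <= d x y.
Definition hfun (d : X -> X -> R) (x0 y : X) : X -> R :=
  fun x => d x y - d x0 y.
(* h is in the closure of {h_y} in Hom(X,R) for pointwise convergence *)
Definition in_metric_compactification (d : X -> X -> R) (x0 : X) (h : X -> R) : Prop :=
  lip1 d h /\
  forall (F : list X) eps, 0 < eps ->
    exists y, forall x, In x F -> Rabs (h x - hfun d x0 y x) < eps.

Definition is_isometry (d : X -> X -> R) (T : X -> X) : Prop :=
  (forall x y, d (T x) (T y) = d x y) /\ (forall y, exists x, T x = y).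

Definition finv (T : X -> X) (x : X) : X :=
  epsilon (inhabits x) (fun y => T y = x).

Definition act (x0 : X) (T : X -> X) (h : X -> R) : X -> R :=
  fun x => h (finv T x) - h (finv T x0).

Definition geodesic_ray (d : X -> X -> R) (g : R -> X) : Prop :=
  forall s t, 0 <= s -> 0 <= t -> d (g s) (g t) = Rabs (s - t).

(* T fixes a point of X, or fixes a boundary point [g]: T∘g ~ g *)
Definition fixes_visual_point (d : X -> X -> R) (T : X -> X) : Prop :=
  (exists x, T x = x) \/
  (exists g, geodesic_ray d g /\
     exists C, forall t, 0 <= t -> d (T (g t)) (g t) <= C).

End MetricDefs.

(** For k >= 0 put lam_k = 1 - 1/(k+1).  By convexity of the CAT(0) metric, the map
    sending x to the point at fraction lam_k of the geodesic from x0 to T x is a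
    lam_k-contraction; its fixed point y_k lies on the geodesic [x0, T y_k] with
    d(y_k, T y_k) = d(x0, T y_k)/(k+1) <= d(x0, T x0).  A comparison-triangle estimate at
    T y_k then gives |h_{T y_k} - h_{y_k}| = O(1/k) pointwise, and since T h_y = h_{T y},
    the limit h of the h_{y_k} along a free ultrafilter satisfies T h = h.

    If X is proper, either d(x0, T y_k) stays bounded along the ultrafilter, and the limit
    of the y_k is a fixed point of T, or it diverges, and the limits of the geodesics
    [x0, T y_k] form a geodesic ray that T moves by at most d(x0, T x0). *)

From Stdlib Require Import Lra Psatz Classical FunctionalExtensionality.
From mathcomp Require all_boot classical_sets filter.

Record free_ultrafilter (U : (nat -> Prop) -> Prop) : Prop := {
  uf_and : forall A B : nat -> Prop, U A -> U B -> U (fun k => A k /\ B k);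
  uf_mono : forall A B : nat -> Prop, (forall k, A k -> B k) -> U A -> U B;
  uf_not_empty : ~ U (fun _ => False);
  uf_or_compl : forall A : nat -> Prop, U A \/ U (fun k => ~ A k);
  uf_ge : forall N, U (fun k => (N <= k)%nat) }.

Arguments uf_and {U} _ {A B} _ _.
Arguments uf_mono {U} _ {A B} _ _.
Arguments uf_not_empty {U} _ _.
Arguments uf_or_compl {U} _ A.
Arguments uf_ge {U} _ N.

Module UltrafilterExistence.
Import all_boot classical_sets filter.

Lemma free_ultrafilter_exists : exists U, free_ultrafilter U.
Proof.
have [G [GU sFG]] := ultraFilterLemma (@eventually_filter).
exists G; split.
- move=> A B HA HB. exact: (filterI HA HB).
- move=> A B AB HA. exact: (filterS AB HA).
- move=> H0. exact: (@filter_not_empty _ G _ H0).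
- move=> A. exact: in_ultra_setVsetC.
- move=> N. apply: sFG. exists N => // k /= Hk. by apply/leP.
Qed.

End UltrafilterExistence.

(** * Limits along an ultrafilter *)

Lemma INR_succ_pos (k : nat) : 0 < INR (S k).
Proof. apply lt_0_INR. lia. Qed.

Definition uf_limR (U : (nat -> Prop) -> Prop) (u : nat -> R) (l : R) : Prop :=
  forall eps, 0 < eps -> U (fun k => Rabs (u k - l) < eps).

Definition uf_lim {X : Type} (d : X -> X -> R) (U : (nat -> Prop) -> Prop)
  (u : nat -> X) (l : X) : Prop :=
  forall eps, 0 < eps -> U (fun k => d (u k) l < eps).

Section Ultrafilter.
Context {U : (nat -> Prop) -> Prop} (HU : free_ultrafilter U).

Lemma uf_witness (A : nat -> Prop) : U A -> exists k, A k.
Proof.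
  intros HA. apply NNPP. intros Hno. apply (uf_not_empty HU).
  refine (uf_mono HU _ HA). intros k Ak. apply Hno. now exists k.
Qed.

Lemma uf_all (A : nat -> Prop) : (forall k, A k) -> U A.
Proof. intros HA. exact (uf_mono HU (fun k _ => HA k) (uf_ge HU 0)). Qed.

Lemma uf_compl (A : nat -> Prop) : ~ U A -> U (fun k => ~ A k).
Proof. intros HnA. destruct (uf_or_compl HU A); tauto. Qed.

Lemma uf_not_union {I : Type} (A : I -> nat -> Prop) (l : list I) :
  (forall i, In i l -> ~ U (A i)) -> ~ U (fun k => exists i, In i l /\ A i k).
Proof.
  induction l as [|i l IH]; intros Hl HUl; apply (uf_not_empty HU).
  - refine (uf_mono HU _ HUl). intros k (j & [] & _).
  - assert (Hi := uf_compl _ (Hl i (or_introl eq_refl))).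
    assert (Hrest := uf_compl _ (IH (fun j Hj => Hl j (or_intror Hj)))).
    refine (uf_mono HU _ (uf_and HU HUl (uf_and HU Hi Hrest))).
    intros k ((j & [<- | Hj] & Aj) & Ni & Nrest); [tauto|]. apply Nrest. eauto.
Qed.

Lemma uf_div_succ_lt (C eps : R) : 0 < eps -> U (fun k => C / INR (S k) < eps).
Proof.
  intros Heps. destruct (INR_unbounded (C / eps)) as [N HN].
  refine (uf_mono HU _ (uf_ge HU N)). intros k Hk.
  assert (Hn : INR N <= INR k) by (apply le_INR; exact Hk).
  assert (Hpos := INR_succ_pos k).
  rewrite S_INR in *.
  apply Rmult_lt_reg_r with (INR k + 1); [lra|].
  replace (C / (INR k + 1) * (INR k + 1)) with C by (field; lra).
  replace C with (C / eps * eps) by (field; lra). nra.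
Qed.

Lemma uf_limR_exists (u : nat -> R) (B : R) :
  (forall k, Rabs (u k) <= B) -> exists l, uf_limR U u l.
Proof.
  intros Hb.
  assert (Hb' : forall k, - B <= u k <= B).
  { intros k. specialize (Hb k). unfold Rabs in Hb. destruct Rcase_abs; lra. }
  set (E := fun r => U (fun k => r <= u k)).
  assert (HE : bound E).
  { exists B. intros r Er. destruct (uf_witness _ Er) as [k Hk]. specialize (Hb' k). lra. }
  assert (Ene : exists r, E r).
  { exists (- B). apply uf_all. intros k. apply Hb'. }
  destruct (completeness E HE Ene) as [m [Hub Hlub]].
  exists m. intros eps Heps.
  assert (Hlow : U (fun k => m - eps / 2 <= u k)).
  { apply NNPP. intros Hn. enough (m <= m - eps / 2) by lra.
    apply Hlub. intros r Er. apply Rnot_lt_le. intros Hr. apply Hn.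
    refine (uf_mono HU _ Er). intros k. lra. }
  assert (Hup : U (fun k => ~ m + eps / 2 <= u k)).
  { apply uf_compl. intros Hc. specialize (Hub _ Hc). lra. }
  refine (uf_mono HU _ (uf_and HU Hlow Hup)).
  intros k [H1 H2]. apply Rabs_def1; lra.
Qed.

Lemma uf_limR_le (u v : nat -> R) (l m : R) :
  uf_limR U u l -> uf_limR U v m -> U (fun k => u k <= v k) -> l <= m.
Proof.
  intros Hu Hv Huv. apply Rnot_lt_le. intros Hlt.
  assert (Heps : 0 < (l - m) / 2) by lra.
  destruct (uf_witness _ (uf_and HU Huv (uf_and HU (Hu _ Heps) (Hv _ Heps))))
    as (k & H1 & H2 & H3).
  apply Rabs_def2 in H2. apply Rabs_def2 in H3. lra.
Qed.

Lemma uf_limR_unique (u : nat -> R) (l m : R) : uf_limR U u l -> uf_limR U u m -> l = m.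
Proof.
  intros Hl Hm. assert (Hrefl : U (fun k => u k <= u k)) by (apply uf_all; intros; lra).
  apply Rle_antisym; eapply uf_limR_le; eassumption.
Qed.

Lemma uf_limR_eventually_eq (u : nat -> R) (c : R) : U (fun k => u k = c) -> uf_limR U u c.
Proof.
  intros Hc eps Heps. refine (uf_mono HU _ Hc). intros k ->.
  rewrite Rminus_diag, Rabs_R0. exact Heps.
Qed.

Lemma uf_limR_minus (u v : nat -> R) (l m : R) :
  uf_limR U u l -> uf_limR U v m -> uf_limR U (fun k => u k - v k) (l - m).
Proof.
  intros Hu Hv eps Heps.
  assert (Heps2 : 0 < eps / 2) by lra.
  refine (uf_mono HU _ (uf_and HU (Hu _ Heps2) (Hv _ Heps2))). intros k [H1 H2].
  replace (u k - v k - (l - m)) with ((u k - l) + - (v k - m)) by ring.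
  eapply Rle_lt_trans; [apply Rabs_triang|]. rewrite Rabs_Ropp. lra.
Qed.

Lemma uf_limR_abs_le (u : nat -> R) (l B : R) :
  uf_limR U u l -> (forall k, Rabs (u k) <= B) -> Rabs l <= B.
Proof.
  intros Hu Hb.
  assert (Hb' : forall k, - B <= u k <= B).
  { intros k. specialize (Hb k). unfold Rabs in Hb. destruct Rcase_abs; lra. }
  assert (HB := uf_limR_eventually_eq (fun _ => B) B (uf_all _ (fun _ => eq_refl))).
  assert (HmB := uf_limR_eventually_eq (fun _ => - B) (- B) (uf_all _ (fun _ => eq_refl))).
  apply Rabs_le. split.
  - apply (uf_limR_le _ _ _ _ HmB Hu). apply uf_all. apply Hb'.
  - apply (uf_limR_le _ _ _ _ Hu HB). apply uf_all. apply Hb'.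
Qed.

Lemma uf_limR_close (u v : nat -> R) (l C : R) :
  uf_limR U u l -> (forall k, Rabs (v k - u k) <= C / INR (S k)) -> uf_limR U v l.
Proof.
  intros Hu Hvu eps Heps.
  assert (Heps2 : 0 < eps / 2) by lra.
  refine (uf_mono HU _ (uf_and HU (Hu _ Heps2) (uf_div_succ_lt C _ Heps2))).
  intros k [H1 H2]. specialize (Hvu k).
  replace (v k - l) with ((v k - u k) + (u k - l)) by ring.
  eapply Rle_lt_trans; [apply Rabs_triang|]. lra.
Qed.

Lemma uf_limR_vanishing (B C : R) : 0 <= C -> uf_limR U (fun k => B + C / INR (S k)) B.
Proof.
  intros HC.
  apply (uf_limR_close (fun _ => B) _ B C).
  - apply uf_limR_eventually_eq, uf_all. reflexivity.
  - intros k. replace (B + C / INR (S k) - B) with (C / INR (S k)) by ring.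
    rewrite Rabs_pos_eq; [lra|]. apply Rmult_le_pos; [exact HC|].
    apply Rlt_le, Rinv_0_lt_compat, INR_succ_pos.
Qed.

Lemma uf_limR_finite {I : Type} (u : nat -> I -> R) (l : I -> R) :
  (forall i, uf_limR U (fun k => u k i) (l i)) ->
  forall (F : list I) eps, 0 < eps ->
    U (fun k => forall i, In i F -> Rabs (u k i - l i) < eps).
Proof.
  intros Hl F eps Heps. induction F as [|i F IH].
  - apply uf_all. intros k i [].
  - refine (uf_mono HU _ (uf_and HU (Hl i eps Heps) IH)).
    intros k [Hi HF] j [<- | Hj]; auto.
Qed.

End Ultrafilter.

(** * Metric spaces and geodesics *)

Section Metric.
Context {X : Type} {d : X -> X -> R} (Hm : is_metric d).

Lemma dist_self x : d x x = 0.
Proof. now apply (d_eq0 _ Hm). Qed.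

Lemma dist_eq0 x y : d x y = 0 -> x = y.
Proof. apply (d_eq0 _ Hm). Qed.

Lemma dist_comm x y : d x y = d y x.
Proof. apply (d_sym _ Hm). Qed.

Lemma dist_tri x y z : d x z <= d x y + d y z.
Proof. apply (d_tri _ Hm). Qed.

Lemma dist_ge0 x y : 0 <= d x y.
Proof. pose proof (dist_tri x y x). rewrite dist_self, (dist_comm y x) in H. lra. Qed.

Lemma dist_tri_abs x y z : Rabs (d x z - d y z) <= d x y.
Proof.
  pose proof (dist_tri x y z). pose proof (dist_tri y x z).
  rewrite (dist_comm y x) in *. apply Rabs_le. lra.
Qed.

Lemma hfun_abs_le x0 y z : Rabs (hfun d x0 y z) <= d z x0.
Proof. apply dist_tri_abs. Qed.

Lemma hfun_lip x0 y x z : Rabs (hfun d x0 y x - hfun d x0 y z) <= d x z.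
Proof.
  unfold hfun. replace (d x y - d x0 y - (d z y - d x0 y)) with (d x y - d z y) by ring.
  apply dist_tri_abs.
Qed.

Lemma closed_ball_compact x0 M : proper d -> is_compact d (fun y => d x0 y <= M).
Proof.
  intros Hp. apply Hp.
  - intros x Hx. exists (d x0 x - M). split; [lra|].
    intros y Hy Hy'. pose proof (dist_tri x0 y x). rewrite (dist_comm y x) in *. lra.
  - now exists x0, M.
Qed.

Section UltrafilterLimits.
Context {U : (nat -> Prop) -> Prop} (HU : free_ultrafilter U).

Lemma uf_lim_exists_compact (K : X -> Prop) (u : nat -> X) :
  is_compact d K -> (forall k, K (u k)) -> exists l, uf_lim d U u l.
Proof.
  (* Otherwise every point of K has a ball that U-almost no u k visits, and finitely
     many of these balls cover K. *)
  intros HK Hu. apply NNPP. intros Hno.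
  assert (Hbad : forall l, exists e, 0 < e /\ ~ U (fun k => d (u k) l < e)).
  { intros l. apply NNPP. intros Hl. apply Hno. exists l. intros eps Heps.
    apply NNPP. intros Hn. apply Hl. eauto. }
  set (I := {l : X & {e : R | 0 < e /\ ~ U (fun k => d (u k) l < e)}}).
  set (ball := fun (i : I) x => d (projT1 i) x < proj1_sig (projT2 i)).
  destruct (HK I ball) as [F HF].
  - intros i x Hx. exists (proj1_sig (projT2 i) - d (projT1 i) x). split.
    + unfold ball in Hx. lra.
    + intros y Hy. unfold ball in *. pose proof (dist_tri (projT1 i) x y). lra.
  - intros x Kx. destruct (Hbad x) as (e & He & Hne).
    exists (existT _ x (exist _ e (conj He Hne))). unfold ball; simpl. now rewrite dist_self.
  - apply (uf_not_union HU (fun i k => ball i (u k)) F).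
    + intros [x [e [He Hne]]] _ Hball. apply Hne. refine (uf_mono HU _ Hball).
      intros k Hk. unfold ball in Hk; simpl in Hk. now rewrite dist_comm.
    + apply (uf_all HU). intros k. apply HF, Hu.
Qed.

Lemma uf_lim_dist (u v : nat -> X) (l m : X) :
  uf_lim d U u l -> uf_lim d U v m -> uf_limR U (fun k => d (u k) (v k)) (d l m).
Proof.
  intros Hu Hv eps Heps.
  assert (Heps2 : 0 < eps / 2) by lra.
  refine (uf_mono HU _ (uf_and HU (Hu _ Heps2) (Hv _ Heps2))). intros k [H1 H2].
  pose proof (dist_tri (u k) l (v k)). pose proof (dist_tri l m (v k)).
  pose proof (dist_tri l (u k) m). pose proof (dist_tri (u k) (v k) m).
  rewrite (dist_comm l (u k)), (dist_comm (v k) m) in *.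
  apply Rabs_def1; lra.
Qed.

Lemma uf_lim_isometry (T : X -> X) (u : nat -> X) (l : X) :
  (forall x y, d (T x) (T y) = d x y) -> uf_lim d U u l -> uf_lim d U (fun k => T (u k)) (T l).
Proof.
  intros HT Hu eps Heps. refine (uf_mono HU _ (Hu _ Heps)). intros k. now rewrite HT.
Qed.

End UltrafilterLimits.

Section Contraction.
Variables (F : X -> X) (lam : R) (x0 : X).
Hypotheses (Hlam : 0 <= lam < 1) (HF : forall x y, d (F x) (F y) <= lam * d x y).

Lemma contraction_iter_dist n m :
  d (Nat.iter n F x0) (Nat.iter (n + m) F x0) <= lam ^ n * (d x0 (F x0) / (1 - lam)).
Proof.
  set (K := d x0 (F x0) / (1 - lam)).
  assert (Horbit : forall j, d x0 (Nat.iter j F x0) <= K).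
  { intros j. induction j as [|j IH]; simpl.
    - rewrite dist_self. apply Rmult_le_pos; [apply dist_ge0|].
      apply Rlt_le, Rinv_0_lt_compat. lra.
    - eapply Rle_trans; [apply (dist_tri x0 (F x0))|].
      assert (d x0 (F x0) = (1 - lam) * K) by (unfold K; field; lra).
      pose proof (HF x0 (Nat.iter j F x0)). nra. }
  revert m. induction n as [|n IH]; intros m; simpl.
  - rewrite Rmult_1_l. apply Horbit.
  - eapply Rle_trans; [apply HF|]. rewrite Rmult_assoc.
    apply Rmult_le_compat_l; [lra | apply IH].
Qed.

Lemma contraction_iter_cauchy : cauchy_seq d (fun n => Nat.iter n F x0).
Proof.
  intros eps Heps.
  remember (d x0 (F x0) / (1 - lam)) as K eqn:EK.
  assert (HK : 0 <= K).
  { rewrite EK. apply Rmult_le_pos; [apply dist_ge0|]. apply Rlt_le, Rinv_0_lt_compat. lra. }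
  destruct (pow_lt_1_zero lam ltac:(rewrite Rabs_pos_eq; lra) (eps / (K + 1)))
    as [N HN]; [apply Rdiv_lt_0_compat; lra|].
  exists N.
  assert (Hsmall : forall n m, (N <= n)%nat ->
    d (Nat.iter n F x0) (Nat.iter (n + m) F x0) < eps).
  { intros n m Hn. specialize (HN n Hn). rewrite Rabs_pos_eq in HN by (apply pow_le; lra).
    assert (lam ^ n * (K + 1) < eps).
    { replace eps with (eps / (K + 1) * (K + 1)) by (field; lra).
      apply Rmult_lt_compat_r; lra. }
    pose proof (pow_le lam n ltac:(lra)). pose proof (contraction_iter_dist n m) as Hd.
    rewrite <- EK in Hd. nra. }
  intros m n Hm' Hn'. destruct (Nat.le_ge_cases m n) as [Hmn | Hmn].
  - replace n with (m + (n - m))%nat by lia. now apply Hsmall.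
  - rewrite dist_comm. replace m with (n + (m - n))%nat by lia. now apply Hsmall.
Qed.

Lemma contraction_fixed_point : complete d -> exists y, F y = y.
Proof.
  intros Hc. destruct (Hc _ contraction_iter_cauchy) as [l Hl]. exists l.
  apply dist_eq0, Rle_antisym; [|apply dist_ge0].
  apply Rnot_lt_le. intros Hpos.
  destruct (Hl (d (F l) l / 3)) as [N HN]; [lra|].
  pose proof (HN N (le_n _)). pose proof (HN (S N) (le_S _ _ (le_n _))).
  pose proof (dist_tri (F l) (F (Nat.iter N F x0)) l). pose proof (HF l (Nat.iter N F x0)).
  pose proof (dist_ge0 (Nat.iter N F x0) l).
  simpl in *. rewrite (dist_comm l (Nat.iter N F x0)) in *.
  nra.
Qed.

End Contraction.

Lemma geodesic_dist_start x y c s : is_geodesic d x y c -> 0 <= s <= d x y -> d x (c s) = s.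
Proof.
  intros (H0 & _ & Hc) Hs. rewrite <- H0 at 1. rewrite Hc by lra.
  rewrite Rabs_left1; lra.
Qed.

Lemma geodesic_rev x y c : is_geodesic d x y c -> is_geodesic d y x (fun s => c (d x y - s)).
Proof.
  intros (H0 & H1 & Hc). unfold is_geodesic. rewrite (dist_comm y x). split; [|split].
  - now rewrite Rminus_0_r.
  - now rewrite Rminus_diag.
  - intros s t Hs Ht. rewrite Hc by lra.
    replace (d x y - s - (d x y - t)) with (- (s - t)) by ring. apply Rabs_Ropp.
Qed.

Lemma geodesic_restrict x y c m : is_geodesic d x y c -> 0 <= m <= d x y -> is_geodesic d x (c m) c.
Proof.
  intros G Hm'. unfold is_geodesic. rewrite (geodesic_dist_start _ _ _ _ G Hm').
  destruct G as (H0 & _ & Hc). split; [|split]; auto.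
  intros s t Hs Ht. apply Hc; lra.
Qed.

Lemma geodesic_isometry (T : X -> X) x y c : (forall x y, d (T x) (T y) = d x y) ->
  is_geodesic d x y c -> is_geodesic d (T x) (T y) (fun s => T (c s)).
Proof.
  intros HT (H0 & H1 & Hc). unfold is_geodesic. rewrite HT. split; [|split].
  - now rewrite H0.
  - now rewrite H1.
  - intros. rewrite HT. auto.
Qed.

End Metric.

(** * CAT(0) comparison *)

Lemma eucl_sq (p q : R * R) : eucl p q ^ 2 = (fst p - fst q) ^ 2 + (snd p - snd q) ^ 2.
Proof.
  unfold eucl. rewrite <- Rsqr_pow2. apply Rsqr_sqrt.
  apply Rplus_le_le_0_compat; apply pow2_ge_0.
Qed.

Lemma eucl_comparison_triangle (A B C : R) :
  0 < A -> C <= A + B -> A <= B + C -> B <= A + C ->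
  exists ybar zbar : R * R,
    eucl (0, 0) ybar = A /\ eucl (0, 0) zbar = B /\ eucl ybar zbar = C /\
    forall al be, eucl (scal al ybar) (scal be zbar) ^ 2 =
      (al * A) ^ 2 + (be * B) ^ 2 - al * be * (A ^ 2 + B ^ 2 - C ^ 2).
Proof.
  intros HA HC1 HA1 HB1.
  set (u := (A ^ 2 + B ^ 2 - C ^ 2) / (2 * A)).
  assert (Hu : u ^ 2 <= B ^ 2).
  { apply Rmult_le_reg_r with ((2 * A) ^ 2); [nra|].
    replace (u ^ 2 * (2 * A) ^ 2) with ((A ^ 2 + B ^ 2 - C ^ 2) ^ 2) by (unfold u; field; lra).
    assert (0 <= C ^ 2 - (A - B) ^ 2) by nra. assert (0 <= (A + B) ^ 2 - C ^ 2) by nra.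
    nra. }
  set (v := sqrt (B ^ 2 - u ^ 2)).
  assert (Hv : v ^ 2 = B ^ 2 - u ^ 2).
  { unfold v. rewrite <- Rsqr_pow2. apply Rsqr_sqrt. lra. }
  assert (Heq : forall p q r, 0 <= r -> eucl p q ^ 2 = r ^ 2 -> eucl p q = r).
  { intros p q r Hr E. rewrite <- (sqrt_pow2 r Hr), <- E. unfold eucl.
    rewrite sqrt_pow2; [reflexivity | apply sqrt_pos]. }
  exists (A, 0), (u, v). repeat split.
  - apply Heq; [lra|]. rewrite eucl_sq; cbn [fst snd]. ring.
  - apply Heq; [lra|]. rewrite eucl_sq; cbn [fst snd].
    replace ((0 - u) ^ 2 + (0 - v) ^ 2) with (u ^ 2 + v ^ 2) by ring. rewrite Hv. ring.
  - apply Heq; [lra|]. rewrite eucl_sq; cbn [fst snd].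
    replace ((A - u) ^ 2 + (0 - v) ^ 2) with (A ^ 2 - 2 * A * u + (u ^ 2 + v ^ 2)) by ring.
    rewrite Hv. unfold u. field. lra.
  - intros al be. rewrite eucl_sq. unfold scal; cbn [fst snd].
    replace ((al * A - be * u) ^ 2 + (al * 0 - be * v) ^ 2)
      with ((al * A) ^ 2 - 2 * al * be * A * u + be ^ 2 * (u ^ 2 + v ^ 2)) by ring.
    rewrite Hv. unfold u. field. lra.
Qed.

Lemma pow2_le_nonneg (x y : R) : 0 <= x -> 0 <= y -> x ^ 2 <= y ^ 2 -> x <= y.
Proof. intros. nra. Qed.

Section CAT0.
Context {X : Type} {d : X -> X -> R} (Hm : is_metric d) (HC : CAT0 d).

Lemma cat0_cosine p a b c1 c2 s t :
  is_geodesic d p a c1 -> is_geodesic d p b c2 -> 0 < d p a -> 0 < d p b ->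
  0 <= s <= d p a -> 0 <= t <= d p b ->
  d (c1 s) (c2 t) ^ 2 <=
    s ^ 2 + t ^ 2 - s * t * (d p a ^ 2 + d p b ^ 2 - d a b ^ 2) / (d p a * d p b).
Proof.
  intros G1 G2 HA HB Hs Ht.
  assert (T1 : d a b <= d p a + d p b) by (rewrite (dist_comm Hm p a); apply (dist_tri Hm)).
  assert (T2 : d p a <= d p b + d a b) by (rewrite (dist_comm Hm a b); apply (dist_tri Hm)).
  assert (T3 : d p b <= d p a + d a b) by apply (dist_tri Hm).
  destruct (eucl_comparison_triangle (d p a) (d p b) (d a b) HA T1 T2 T3)
    as (ybar & zbar & E1 & E2 & E3 & Ecos).
  pose proof (proj2 HC p a b c1 c2 ybar zbar G1 G2 E1 E2 E3 s t Hs Ht) as Hcmp.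
  replace (s ^ 2 + t ^ 2 - s * t * (d p a ^ 2 + d p b ^ 2 - d a b ^ 2) / (d p a * d p b))
    with (eucl (scal (s / d p a) ybar) (scal (t / d p b) zbar) ^ 2)
    by (rewrite Ecos; field; lra).
  apply pow_incr. split; [apply (dist_ge0 Hm) | exact Hcmp].
Qed.

Lemma cat0_dist_convex p a b c1 c2 al :
  is_geodesic d p a c1 -> is_geodesic d p b c2 -> 0 <= al <= 1 ->
  d (c1 (al * d p a)) (c2 (al * d p b)) <= al * d a b.
Proof.
  intros G1 G2 Hal.
  pose proof (dist_ge0 Hm p a). pose proof (dist_ge0 Hm p b). pose proof (dist_ge0 Hm a b).
  destruct (Req_dec (d p a) 0) as [EA | EA].
  - rewrite EA, Rmult_0_r, (proj1 G1), (geodesic_dist_start _ _ _ _ G2) by nra.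
    now rewrite (dist_eq0 Hm _ _ EA).
  - destruct (Req_dec (d p b) 0) as [EB | EB].
    + rewrite EB, Rmult_0_r, (proj1 G2), (dist_comm Hm),
        (geodesic_dist_start _ _ _ _ G1) by nra.
      now rewrite (dist_eq0 Hm _ _ EB), (dist_comm Hm a).
    + assert (HA : 0 < d p a) by lra. assert (HB : 0 < d p b) by lra.
      assert (Hsq : d (c1 (al * d p a)) (c2 (al * d p b)) ^ 2 <= (al * d a b) ^ 2).
      { eapply Rle_trans; [apply (cat0_cosine p a b); auto; split; nra|]. right. field. lra. }
      apply pow2_le_nonneg; [apply (dist_ge0 Hm) | nra | exact Hsq].
Qed.

Lemma cat0_dist_sq_near_end x0 q c z dl :
  is_geodesic d x0 q c -> 0 < d x0 q -> 0 <= dl <= d x0 q ->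
  d z (c (d x0 q - dl)) ^ 2 <= d z q ^ 2 + dl ^ 2 - 2 * dl * (d x0 q - d z x0).
Proof.
  intros G HL Hdl.
  assert (RG := geodesic_rev Hm _ _ _ G).
  assert (Hdl' : 0 <= dl <= d q x0) by now rewrite (dist_comm Hm q x0).
  destruct (Req_dec (d z q) 0) as [Eb | Eb].
  - apply (dist_eq0 Hm) in Eb. subst z.
    rewrite (geodesic_dist_start _ _ _ dl RG Hdl'), (dist_self Hm), (dist_comm Hm q x0).
    right. ring.
  - destruct (proj1 HC q z) as [g Gg].
    assert (Gz : g (d q z) = z) by apply Gg.
    assert (Hb : 0 < d q z) by (rewrite (dist_comm Hm); pose proof (dist_ge0 Hm z q); lra).
    pose proof (cat0_cosine q x0 z _ g dl (d q z) RG Gg) as Hcos. cbv beta in Hcos.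
    rewrite Gz, (dist_comm Hm q x0), (dist_comm Hm q z), (dist_comm Hm x0 z),
      (dist_comm Hm (c _) z) in Hcos.
    rewrite (dist_comm Hm q x0) in Hdl'. rewrite (dist_comm Hm q z) in Hb.
    eapply Rle_trans; [apply Hcos; lra|].
    pose proof (dist_tri Hm x0 z q). pose proof (dist_tri Hm z q x0).
    rewrite (dist_comm Hm x0 z), (dist_comm Hm q x0) in *.
    remember (d x0 q) as L. remember (d z x0) as a. remember (d z q) as b.
    assert (b ^ 2 >= (L - a) ^ 2) by nra.
    apply Rmult_le_reg_r with L; [exact HL|].
    replace ((dl ^ 2 + b ^ 2 - dl * b * (L ^ 2 + b ^ 2 - a ^ 2) / (L * b)) * L)
      with ((dl ^ 2 + b ^ 2) * L - dl * (L ^ 2 + b ^ 2 - a ^ 2)) by (field; lra).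
    nra.
Qed.

Lemma cat0_geodesic_defect x0 q c z dl :
  is_geodesic d x0 q c -> 0 <= dl <= d x0 q ->
  (dl + d z (c (d x0 q - dl)) - d z q) * d x0 q <= dl * (2 * d z x0 + dl).
Proof.
  intros G Hdl.
  destruct (Req_dec (d x0 q) 0) as [EL | EL].
  { replace dl with 0 by lra. rewrite EL. right. ring. }
  assert (HL : 0 < d x0 q) by (pose proof (dist_ge0 Hm x0 q); lra).
  pose proof (cat0_dist_sq_near_end x0 q c z dl G HL Hdl) as Hw.
  assert (Dq : d q (c (d x0 q - dl)) = dl).
  { apply (geodesic_dist_start _ _ _ dl (geodesic_rev Hm _ _ _ G)).
    now rewrite (dist_comm Hm q x0). }
  pose proof (dist_tri Hm z q (c (d x0 q - dl))) as Hwb.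
  pose proof (dist_tri Hm z (c (d x0 q - dl)) q) as Hbw.
  pose proof (dist_tri Hm z x0 q) as HbL.
  rewrite (dist_comm Hm (c _) q), Dq in *.
  pose proof (dist_ge0 Hm z (c (d x0 q - dl))).
  pose proof (dist_ge0 Hm z x0). pose proof (dist_ge0 Hm z q).
  remember (d z (c (d x0 q - dl))) as w.
  remember (d x0 q) as L. remember (d z x0) as a. remember (d z q) as b.
  destruct (Rle_dec dl (2 * (L - a))) as [Hsmall | Hlarge].
  - assert (Hwb' : w <= b) by nra.
    assert ((w - b) * (2 * L + 2 * a + dl) <= (w - b) * (w + b)) by nra.
    assert ((dl + w - b) * (2 * L) <= (dl + w - b) * (2 * L + 2 * a + dl)) by nra.
    nra.
  - nra.
Qed.

End CAT0.

(** * Approximate fixed points of an isometry *)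

Lemma finv_spec {X : Type} (T : X -> X) (x : X) : (exists y, T y = x) -> T (finv T x) = x.
Proof. intros Hsurj. unfold finv. now apply epsilon_spec. Qed.

Lemma act_hfun {X : Type} {d : X -> X -> R} (x0 : X) (T : X -> X) (y : X) :
  is_isometry d T -> act x0 T (hfun d x0 y) = hfun d x0 (T y).
Proof.
  intros [Hdist Hsurj]. apply functional_extensionality. intros z.
  unfold act, hfun. rewrite <- (Hdist (finv T z) y), <- (Hdist (finv T x0) y).
  rewrite !finv_spec by apply Hsurj. ring.
Qed.

Section IsometryOfCAT0.
Context {X : Type} {d : X -> X -> R} (x0 : X) (T : X -> X).
Hypotheses (Hm : is_metric d) (HC : CAT0 d) (Hc : complete d) (HT : is_isometry d T).

Definition geo (x y : X) : R -> X := epsilon (inhabits (fun _ => x)) (is_geodesic d x y).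

Lemma geo_spec x y : is_geodesic d x y (geo x y).
Proof. unfold geo. apply epsilon_spec, (proj1 HC). Qed.

Definition lam (k : nat) : R := 1 - / INR (S k).

Lemma lam_bounds k : 0 <= lam k < 1.
Proof.
  assert (Hn : 1 <= INR (S k)) by (rewrite S_INR; pose proof (pos_INR k); lra).
  assert (Hinv : 0 < / INR (S k) <= 1).
  { split; [apply Rinv_0_lt_compat; lra|]. rewrite <- Rinv_1. apply Rinv_le_contravar; lra. }
  unfold lam. lra.
Qed.

Lemma T_dist x y : d (T x) (T y) = d x y.
Proof. apply (proj1 HT). Qed.

Definition Fk (k : nat) (x : X) : X := geo x0 (T x) (lam k * d x0 (T x)).

Lemma Fk_contraction k x y : d (Fk k x) (Fk k y) <= lam k * d x y.
Proof.
  unfold Fk. rewrite <- (T_dist x y). pose proof (lam_bounds k).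
  apply (cat0_dist_convex Hm HC); [apply geo_spec .. | lra].
Qed.

Definition yk (k : nat) : X := epsilon (inhabits x0) (fun y => Fk k y = y).
Definition Lk (k : nat) : R := d x0 (T (yk k)).
Definition ck (k : nat) : R -> X := geo x0 (T (yk k)).
Definition disp_x0 : R := d x0 (T x0).

Lemma ck_geodesic k : is_geodesic d x0 (T (yk k)) (ck k).
Proof. apply geo_spec. Qed.

Lemma yk_on_ck k : ck k (lam k * Lk k) = yk k.
Proof.
  unfold yk. apply (epsilon_spec (inhabits x0) (fun y => Fk k y = y)).
  exact (contraction_fixed_point Hm (Fk k) (lam k) x0 (lam_bounds k) (Fk_contraction k) Hc).
Qed.

Lemma Lk_ge0 k : 0 <= Lk k.
Proof. apply (dist_ge0 Hm). Qed.

Lemma dist_x0_yk k : d x0 (yk k) = lam k * Lk k.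
Proof.
  rewrite <- yk_on_ck at 1. pose proof (lam_bounds k). pose proof (Lk_ge0 k).
  apply (geodesic_dist_start _ _ _ _ (ck_geodesic k)). fold (Lk k). nra.
Qed.

Lemma displacement_yk k : d (yk k) (T (yk k)) = Lk k / INR (S k).
Proof.
  pose proof (lam_bounds k). pose proof (Lk_ge0 k). pose proof (INR_succ_pos k).
  destruct (ck_geodesic k) as (_ & Hend & Hck). fold (Lk k) in Hend, Hck.
  rewrite <- yk_on_ck at 1. rewrite <- Hend at 1. rewrite Hck by nra.
  rewrite Rabs_left1 by nra. unfold lam. field. lra.
Qed.

Lemma displacement_yk_le k : d (yk k) (T (yk k)) <= disp_x0.
Proof.
  pose proof (dist_tri Hm x0 (T x0) (T (yk k))) as Htri.
  rewrite T_dist, dist_x0_yk in Htri. fold (Lk k) disp_x0 in Htri.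
  rewrite displacement_yk. unfold lam in Htri. pose proof (INR_succ_pos k).
  replace (Lk k / INR (S k)) with (Lk k - (1 - / INR (S k)) * Lk k) by (field; lra).
  lra.
Qed.

Lemma hfun_displacement_yk k z :
  Rabs (hfun d x0 (T (yk k)) z - hfun d x0 (yk k) z) <= (2 * d z x0 + disp_x0) / INR (S k).
Proof.
  pose proof (INR_succ_pos k) as Hn. pose proof (lam_bounds k). pose proof (Lk_ge0 k).
  pose proof (displacement_yk k) as Hdisp. pose proof (displacement_yk_le k) as HD.
  pose proof (dist_ge0 Hm z x0). pose proof (dist_ge0 Hm x0 (T x0)).
  pose proof (dist_tri Hm z (yk k) (T (yk k))) as Hbw.
  pose proof (dist_tri Hm z (T (yk k)) (yk k)) as Hwb.
  rewrite (dist_comm Hm (T _)) in Hwb.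
  remember (d (yk k) (T (yk k))) as dl eqn:Edl.
  assert (HL : Lk k = dl * INR (S k)) by (rewrite Hdisp; field; lra).
  assert (Hyk : ck k (Lk k - dl) = yk k).
  { rewrite <- yk_on_ck. f_equal. rewrite Hdisp. unfold lam. field. lra. }
  pose proof (cat0_geodesic_defect Hm HC x0 _ _ z dl (ck_geodesic k)) as Hdef.
  fold (Lk k) in Hdef. rewrite Hyk, HL in Hdef.
  unfold hfun. fold (Lk k). rewrite dist_x0_yk.
  replace (d z (T (yk k)) - Lk k - (d z (yk k) - lam k * Lk k))
    with (- (dl + d z (yk k) - d z (T (yk k)))) by (rewrite Hdisp; unfold lam; field; lra).
  rewrite Rabs_Ropp, Rabs_pos_eq by lra.
  apply (Rmult_le_reg_r (INR (S k))); [exact Hn|].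
  replace ((2 * d z x0 + disp_x0) / INR (S k) * INR (S k)) with (2 * d z x0 + disp_x0)
    by (field; lra).
  destruct (Req_dec dl 0) as [E0 | E0].
  - rewrite E0 in *. unfold disp_x0. nra.
  - assert (Hdl : 0 <= dl <= dl * INR (S k)).
    { assert (0 <= dl) by (rewrite Edl; apply (dist_ge0 Hm)).
      assert (1 <= INR (S k)) by (rewrite S_INR; pose proof (pos_INR k); lra).
      split; nra. }
    specialize (Hdef Hdl). unfold disp_x0 in *. nra.
Qed.

Section HorofunctionLimit.
Context {U : (nat -> Prop) -> Prop} (HU : free_ultrafilter U).

Definition hlim (z : X) : R :=
  epsilon (inhabits 0) (uf_limR U (fun k => hfun d x0 (yk k) z)).

Lemma hlim_spec z : uf_limR U (fun k => hfun d x0 (yk k) z) (hlim z).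
Proof.
  unfold hlim. apply epsilon_spec.
  apply (uf_limR_exists HU _ (d z x0)). intros k. apply (hfun_abs_le Hm).
Qed.

Lemma hlim_in_metric_compactification : in_metric_compactification d x0 hlim.
Proof.
  split.
  - intros x z. apply (uf_limR_abs_le HU (fun k => hfun d x0 (yk k) x - hfun d x0 (yk k) z)).
    + apply (uf_limR_minus HU); apply hlim_spec.
    + intros k. apply (hfun_lip Hm).
  - intros F eps Heps.
    destruct (uf_witness HU _ (uf_limR_finite HU _ _ hlim_spec F eps Heps)) as [k Hk].
    exists (yk k). intros x Hx. rewrite Rabs_minus_sym. auto.
Qed.

Lemma act_hlim : act x0 T hlim = hlim.
Proof.
  apply functional_extensionality. intros z.
  apply (uf_limR_unique HU (fun k => hfun d x0 (T (yk k)) z)).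
  - replace (fun k => hfun d x0 (T (yk k)) z)
      with (fun k => hfun d x0 (yk k) (finv T z) - hfun d x0 (yk k) (finv T x0)).
    + apply (uf_limR_minus HU); apply hlim_spec.
    + apply functional_extensionality. intros k. now rewrite <- (act_hfun x0 T (yk k) HT).
  - apply (uf_limR_close HU _ _ _ (2 * d z x0 + disp_x0) (hlim_spec z)).
    intros k. apply hfun_displacement_yk.
Qed.

End HorofunctionLimit.

Lemma isometry_fixes_metric_functional :
  exists h, in_metric_compactification d x0 h /\ act x0 T h = h.
Proof.
  destruct UltrafilterExistence.free_ultrafilter_exists as [U HU].
  exists (hlim (U := U)). split; [apply hlim_in_metric_compactification | apply act_hlim]; exact HU.
Qed.

Lemma displacement_along_ck k t :
  0 < Lk k -> 0 <= t <= lam k * Lk k -> d (ck k t) (T (ck k t)) <= disp_x0 + t / INR (S k).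
Proof.
  intros HL Ht. pose proof (lam_bounds k). pose proof (INR_succ_pos k).
  pose proof (ck_geodesic k) as G.
  assert (HlL : 0 <= lam k * Lk k <= d x0 (T (yk k))) by (fold (Lk k); nra).
  pose proof (geodesic_restrict _ _ _ _ G HlL) as RS. rewrite yk_on_ck in RS.
  pose proof (geodesic_isometry T _ _ _ T_dist (geodesic_rev Hm _ _ _ RS)) as IG.
  (* Convexity at the vertex T y_k, between [T y_k, x0] and the image under T of
     [y_k, x0], compares c_k t with T (c_k (lam_k t)). *)
  remember ((Lk k - t) / Lk k) as al eqn:Eal.
  assert (Hal : 0 <= al <= 1).
  { rewrite Eal. split; apply (Rmult_le_reg_r (Lk k)); try exact HL;
      replace ((Lk k - t) / Lk k * Lk k) with (Lk k - t) by (field; lra); nra. }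
  pose proof (cat0_dist_convex Hm HC _ _ _ _ _ al (geodesic_rev Hm _ _ _ G) IG Hal) as CV.
  cbv beta in CV.
  rewrite (dist_comm Hm (T (yk k)) x0), T_dist, (dist_comm Hm (yk k) x0), dist_x0_yk in CV.
  fold (Lk k) disp_x0 in CV.
  replace (Lk k - al * Lk k) with t in CV by (rewrite Eal; field; lra).
  replace (lam k * Lk k - al * (lam k * Lk k)) with (lam k * t) in CV
    by (rewrite Eal; field; lra).
  pose proof (dist_tri Hm (ck k t) (T (ck k (lam k * t))) (T (ck k t))) as Htri.
  rewrite T_dist in Htri. destruct G as (_ & _ & Hck). fold (Lk k) in Hck.
  rewrite Hck, Rabs_left1 in Htri by nra.
  replace (- (lam k * t - t)) with (t / INR (S k)) in Htri by (unfold lam; field; lra).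
  assert (al * disp_x0 <= disp_x0) by (unfold disp_x0; pose proof (dist_ge0 Hm x0 (T x0)); nra).
  lra.
Qed.

Section VisualLimit.
Context {U : (nat -> Prop) -> Prop} (HU : free_ultrafilter U) (Hp : proper d).

Lemma fixed_point_of_bounded (M : R) : U (fun k => Lk k <= M) -> exists x, T x = x.
Proof.
  intros HM.
  assert (HM0 : 0 <= M).
  { destruct (uf_witness HU _ HM) as [k Hk]. pose proof (Lk_ge0 k). lra. }
  set (u k := if Rle_dec (Lk k) M then yk k else x0).
  destruct (uf_lim_exists_compact Hm HU _ u (closed_ball_compact Hm x0 M Hp)) as [l Hl].
  { intros k. unfold u. destruct (Rle_dec (Lk k) M) as [HLM | _].
    - rewrite dist_x0_yk. pose proof (lam_bounds k). pose proof (Lk_ge0 k). nra.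
    - rewrite (dist_self Hm). exact HM0. }
  exists l. apply (dist_eq0 Hm), Rle_antisym; [|apply (dist_ge0 Hm)].
  apply (uf_limR_le HU (fun k => d (T (u k)) (u k)) (fun k => 0 + M / INR (S k))).
  - apply (uf_lim_dist Hm HU); [apply (uf_lim_isometry HU) |]; [exact T_dist | exact Hl ..].
  - apply (uf_limR_vanishing HU). exact HM0.
  - refine (uf_mono HU _ HM). intros k Hk. unfold u.
    destruct (Rle_dec (Lk k) M) as [_ | Hn]; [|contradiction].
    rewrite (dist_comm Hm), displacement_yk, Rplus_0_l.
    apply Rmult_le_compat_r; [apply Rlt_le, Rinv_0_lt_compat, INR_succ_pos | exact Hk].
Qed.

Definition ray (t : R) : X :=
  epsilon (inhabits x0) (uf_lim d U (fun k => ck k (Rmin t (Lk k)))).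

Lemma ray_spec t : 0 <= t -> uf_lim d U (fun k => ck k (Rmin t (Lk k))) (ray t).
Proof.
  intros Ht. unfold ray. apply epsilon_spec.
  apply (uf_lim_exists_compact Hm HU _ _ (closed_ball_compact Hm x0 t Hp)).
  intros k. pose proof (Lk_ge0 k).
  rewrite (geodesic_dist_start _ _ _ _ (ck_geodesic k)).
  - apply Rmin_l.
  - split; [apply Rmin_glb; lra | apply Rmin_r].
Qed.

Hypothesis Hunbounded : forall M, U (fun k => M < Lk k).

Lemma ray_geodesic : geodesic_ray d ray.
Proof.
  intros s t Hs Ht.
  apply (uf_limR_unique HU (fun k => d (ck k (Rmin s (Lk k))) (ck k (Rmin t (Lk k))))).
  - apply (uf_lim_dist Hm HU); apply ray_spec; assumption.
  - apply (uf_limR_eventually_eq HU). refine (uf_mono HU _ (Hunbounded (s + t))).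
    intros k Hk. rewrite !Rmin_left by lra.
    destruct (ck_geodesic k) as (_ & _ & Hck). apply Hck; fold (Lk k); lra.
Qed.

Lemma ray_displacement t : 0 <= t -> d (T (ray t)) (ray t) <= disp_x0.
Proof.
  intros Ht.
  apply (uf_limR_le HU (fun k => d (T (ck k (Rmin t (Lk k)))) (ck k (Rmin t (Lk k))))
           (fun k => disp_x0 + t / INR (S k))).
  - apply (uf_lim_dist Hm HU); [apply (uf_lim_isometry HU) |]; [exact T_dist | apply ray_spec ..];
      exact Ht.
  - apply (uf_limR_vanishing HU). exact Ht.
  - refine (uf_mono HU _ (uf_and HU (Hunbounded (2 * t)) (uf_ge HU 1))). intros k [Hk Hk1].
    assert (Hlam : 1 / 2 <= lam k).
    { unfold lam. rewrite S_INR. assert (1 <= INR k) by (apply (le_INR 1); exact Hk1).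
      assert (/ (INR k + 1) <= / 2) by (apply Rinv_le_contravar; lra). lra. }
    rewrite Rmin_left by lra. rewrite (dist_comm Hm).
    apply displacement_along_ck; [lra | nra].
Qed.

End VisualLimit.

Lemma isometry_fixes_visual_point : proper d -> fixes_visual_point d T.
Proof.
  intros Hp. destruct UltrafilterExistence.free_ultrafilter_exists as [U HU].
  destruct (classic (exists M, U (fun k => Lk k <= M))) as [[M HM] | Hunb].
  - left. exact (fixed_point_of_bounded HU Hp M HM).
  - assert (Hunbounded : forall M, U (fun k => M < Lk k)).
    { intros M. refine (uf_mono HU _ (uf_compl HU _ (fun HM => Hunb (ex_intro _ M HM)))).
      intros k. apply Rnot_le_lt. }
    right. exists (ray (U := U)). split; [exact (ray_geodesic HU Hp Hunbounded)|].
    exists disp_x0. exact (ray_displacement HU Hp Hunbounded).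
Qed.

End IsometryOfCAT0.

Theorem corollary5 (X : Type) (d : X -> X -> R) (x0 : X) :
  is_metric d -> complete d -> CAT0 d ->
  (forall T : X -> X, is_isometry d T ->
     exists h : X -> R, in_metric_compactification d x0 h /\ act x0 T h = h) /\
  (proper d -> forall T : X -> X, is_isometry d T -> fixes_visual_point d T).
Proof.
  intros Hm Hc HC. split.
  - intros T HT. exact (isometry_fixes_metric_functional x0 T Hm HC Hc HT).
  - intros Hp T HT. exact (isometry_fixes_visual_point x0 T Hm HC Hc HT Hp).
Qed.
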